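(* Let $p$ be a prime and $n,k$ positive integers with $(p,k-1)=1$ and $n=\mathrm{ind}_p(k)$; let $G=G(p,n,k)=\langle a,b;\ a^p=1,\ b^n=1,\ b^{-1}ab=a^k\rangle$, $R=\{k^j-1 \bmod p: j\in\mathbb{Z}_n\}$ and $L=\{1-k^j \bmod p: j\in\mathbb{Z}_n\}$. Then the following are equivalent: (i) $\mathrm{P}(G)=\Lambda(G)$; (ii) $\mathrm{P}(G)\cong\Lambda(G)$; (iii) $|\mathrm{P}(G)|=|\Lambda(G)|$; (iv) $|R^*|=|L^*|$.
   Context: $\mathrm{ind}_p(k)$ is the least positive integer $d$ with $k^d\equiv 1\pmod p$. $S^*$ denotes the multiplicative subsemigroup of $\mathbb{Z}_p$ generated by $S$. Commutators are $[x,y]=x^{-1}y^{-1}xy$. For $g\in G$, $\rho(g),\lambda(g):G\to G$ are $(x)\rho(g)=[x,g]$, $(x)\lambda(g)=[g,x]$. $\mathrm{P}(G)$ and $\Lambda(G)$ are the subsemigroups (under composition) of the semigroup of all maps $G\to G$ generated by $\{\rho(g):g\in G\}$ and $\{\lambda(g):g\in G\}$ respectively. *)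

From HB Require Import structures.
From mathcomp Require Import all_boot all_algebra all_fingroup.
From mathcomp Require Import boolp.
Set Implicit Arguments. Unset Strict Implicit. Unset Printing Implicit Defensive.

Definition is_ind (p k d : nat) : Prop :=
  [/\ 0 < d, k ^ d = 1 %[mod p] &
      forall e, 0 < e -> k ^ e = 1 %[mod p] -> d <= e].

Inductive in_gen_sg (T : Type) (op : T -> T -> T) (S : T -> Prop) : T -> Prop :=
  | gen_sg_base x : S x -> in_gen_sg op S x
  | gen_sg_op x y : in_gen_sg op S x -> in_gen_sg op S y -> in_gen_sg op S (op x y).

Definition gen_sg (T : finType) (op : T -> T -> T) (S : {set T}) : {set T} :=
  [set x | `[< in_gen_sg op (fun y => y \in S) x >] ].

(* composition of maps written on the right: (x)(f g) = ((x)f)g *)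
Definition rcomp (T : finType) (f g : {ffun T -> T}) : {ffun T -> T} :=
  [ffun x => g (f x)].

Local Open Scope group_scope.
Definition rho (gT : finGroupType) (g : gT) : {ffun gT -> gT} := [ffun x => [~ x, g]].
Definition lam (gT : finGroupType) (g : gT) : {ffun gT -> gT} := [ffun x => [~ g, x]].

Definition Rho_sg (gT : finGroupType) : {set {ffun gT -> gT}} :=
  gen_sg (@rcomp gT) [set rho g | g : gT].
Definition Lam_sg (gT : finGroupType) : {set {ffun gT -> gT}} :=
  gen_sg (@rcomp gT) [set lam g | g : gT].

Definition sg_isomorphic (T : finType) (op : T -> T -> T) (A B : {set T}) : Prop :=
  exists phi : T -> T,
    [/\ {in A &, injective phi}, phi @: A = B &
        {in A &, forall f g, phi (op f g) = op (phi f) (phi g)}].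

From HB Require Import structures.
From mathcomp Require Import all_boot all_algebra all_fingroup.
From mathcomp Require Import cyclic boolp ring.

Set Implicit Arguments.
Unset Strict Implicit.
Unset Printing Implicit Defensive.

Import GRing.Theory.
Local Open Scope ring_scope.

(* Write G = <a> x| <b> with #[a] = p, and its elements as a^u b^j with u in F_p.
   Every rho(g) and lambda(g) is a map a^u b^j |-> a^(c u k^j + d (k^j - 1)),
   with c in R for rho, c in L for lambda, and d arbitrary; two such maps compose
   as (c, d) then (c', d') = (c' c, c' d).  Hence P(G) and Lambda(G) are the maps
   with c in R^* and c in L^* respectively, d arbitrary, so they have p |R^*| and
   p |L^*| elements.  A multiplicatively closed subset of F_p containing 0 is 0
   together with the roots of unity of some order, so it is determined by its
   size: |R^*| = |L^*| forces R^* = L^* and then P(G) = Lambda(G).  That G is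
   presented by these relations, not merely a quotient of that group, is only
   needed for a <> 1, which the nonabelian model z |-> z + 1, z |-> k z on F_p
   provides. *)

Section GeneratedSemigroup.
Variables (T : finType) (op : T -> T -> T).

Lemma gen_sgP (S : {set T}) z :
  reflect (in_gen_sg op (fun y => y \in S) z) (z \in gen_sg op S).
Proof. by rewrite inE; apply: asboolP. Qed.

Lemma mem_gen_sg (S : {set T}) z : z \in S -> z \in gen_sg op S.
Proof. by move=> zS; apply/gen_sgP/gen_sg_base. Qed.

Lemma gen_sg_op (S : {set T}) : {in gen_sg op S &, forall u v, op u v \in gen_sg op S}.
Proof. by move=> u v /gen_sgP uS /gen_sgP vS; apply/gen_sgP/gen_sg_op. Qed.

Lemma sg_isomorphic_refl (A : {set T}) : sg_isomorphic op A A.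
Proof. by exists id; split=> //; rewrite imset_id. Qed.

Lemma sg_isomorphic_card (A B : {set T}) : sg_isomorphic op A B -> #|A| = #|B|.
Proof. by case=> phi [phi_inj <- _]; rewrite card_in_imset. Qed.

End GeneratedSemigroup.

Section MulClosedSubsets.
Variable F : finFieldType.

Lemma expr_card_mulr_closed (H : {set F}) :
  0 \notin H -> {in H &, forall u v, u * v \in H} ->
  {in H, forall z, z ^+ #|H| = 1}.
Proof.
move=> H0 mulH z zH; have z0 : z != 0 by apply: contraTneq zH => ->.
have zH_eq : [set z * w | w in H] = H.
  apply/eqP; rewrite eqEcard card_in_imset; last by move=> u v _ _; apply: mulfI.
  by rewrite leqnn andbT; apply/subsetP=> _ /imsetP[w wH ->]; apply: mulH.
have prodH_neq0 : \prod_(w in H) w != 0.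
  by apply/prodf_neq0 => w wH; apply: contraTneq wH => ->.
(* multiplication by [z] permutes [H], so it fixes the product of [H] *)
apply: (mulIf prodH_neq0); rewrite mul1r -prodr_const -big_split /=.
by rewrite -[in RHS]zH_eq big_imset //; move=> u v _ _; apply: mulfI.
Qed.

Lemma mulr_closed_unity_roots (H : {set F}) :
  0 \notin H -> {in H &, forall u v, u * v \in H} -> H != set0 ->
  H = [set z | z ^+ #|H| == 1].
Proof.
move=> H0 mulH /set0Pn[z0 z0H]; apply/eqP; rewrite eqEcard.
apply/andP; split.
  by apply/subsetP=> z zH; rewrite inE expr_card_mulr_closed.
rewrite cardE max_unity_roots ?enum_uniq //; first by apply/card_gt0P; exists z0.
by apply/allP=> z; rewrite mem_enum inE => /eqP zH; apply/unity_rootP.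
Qed.

Lemma mulr_closed0_card_inj (S T : {set F}) :
  0 \in S -> 0 \in T ->
  {in S &, forall u v, u * v \in S} -> {in T &, forall u v, u * v \in T} ->
  #|S| = #|T| -> S = T.
Proof.
have nz_closed (A : {set F}) : {in A &, forall u v, u * v \in A} ->
    {in A :\ 0 &, forall u v, u * v \in A :\ 0}.
  move=> mulA u v /setD1P[u0 uA] /setD1P[v0 vA].
  by rewrite !inE mulf_neq0 // mulA.
have nz_notin (A : {set F}) : 0 \notin A :\ 0 by rewrite !inE eqxx.
move=> S0 T0 mulS mulT cardST; rewrite -(setD1K S0) -(setD1K T0); congr (_ |: _).
have cardST0 : #|S :\ 0| = #|T :\ 0|.
  by move: cardST; rewrite (cardsD1 0 S) (cardsD1 0 T) S0 T0 => /addnI.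
have [S0_eq0 | S0_neq0] := eqVneq (S :\ 0) set0.
  by rewrite S0_eq0 cards0 in cardST0; rewrite S0_eq0 (cards0_eq (esym cardST0)).
have T0_neq0 : T :\ 0 != set0 by rewrite -card_gt0 -cardST0 card_gt0.
rewrite (mulr_closed_unity_roots (nz_notin S) (nz_closed S mulS) S0_neq0).
by rewrite (mulr_closed_unity_roots (nz_notin T) (nz_closed T mulT) T0_neq0) cardST0.
Qed.

End MulClosedSubsets.

Lemma mem0_subrX1 (R : finPzRingType) (x : R) n :
  (0 < n)%N -> 0 \in [set x ^+ j - 1 | j : 'I_n].
Proof. by move=> n_gt0; apply/imsetP; exists (Ordinal n_gt0); rewrite //= expr0 subrr. Qed.

Lemma mem0_subr1X (R : finPzRingType) (x : R) n :
  (0 < n)%N -> 0 \in [set 1 - x ^+ j | j : 'I_n].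
Proof. by move=> n_gt0; apply/imsetP; exists (Ordinal n_gt0); rewrite //= expr0 subrr. Qed.

Section PrimeField.
Variables (p : nat) (p_prime : prime p).
Local Notation F := 'F_p.

Lemma natr_Fp (e : F) : (e : nat)%:R = e.
Proof.
apply: val_inj; rewrite /= val_Fp_nat // modn_small //.
by rewrite -[X in (_ < X)%N](Fp_cast p_prime) ltn_ord.
Qed.

Lemma Fp_nat_neq1 k : (0 < k)%N -> coprime p k.-1 -> (k%:R : F) != 1.
Proof.
move=> k_gt0; rewrite prime_coprime // (dvdn_pcharf (pchar_Fp p_prime)).
by apply: contra => /eqP k1; rewrite -subn1 natrB // k1 subrr.
Qed.

Lemma Fp_nat_eq_mod m m' : m = m' %[mod p] -> (m%:R : F) = m'%:R.
Proof. by move=> eq_mm'; rewrite -(Fp_nat_mod p_prime) eq_mm' Fp_nat_mod. Qed.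

End PrimeField.

Section AffineModel.
Variables (p n k : nat) (p_prime : prime p).
Local Notation F := 'F_p.
Local Notation kk := (k%:R : F).
Hypotheses (kk_neq0 : kk != 0) (kk_neq1 : kk != 1) (kk_expn : kk ^+ n = 1).

Definition shift1 : {perm F} := perm (addIr 1).
Definition scalek : {perm F} := perm (mulIf kk_neq0).

Lemma shift1X m z : (shift1 ^+ m)%g z = z + m%:R.
Proof.
elim: m z => [|m IH] z; first by rewrite expg0 perm1 addr0.
by rewrite expgSr permM IH permE /= mulrS; ring.
Qed.

Lemma scalekX m z : (scalek ^+ m)%g z = z * kk ^+ m.
Proof.
elim: m z => [|m IH] z; first by rewrite expg0 perm1 expr0 mulr1.
by rewrite expgSr permM IH permE /= exprSr mulrA.
Qed.

Lemma affine_model_hom :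
  ((<[shift1]> <*> <[scalek]>)%G \homg Grp (a : b : (a ^+ p, b ^+ n, a ^ b = a ^+ k)))%g.
Proof.
apply/existsP; exists (shift1, scalek); rewrite /= !xpair_eqE /=.
apply/and4P; split=> //; apply/eqP/permP => z.
- by rewrite shift1X perm1 -(Fp_nat_mod p_prime) modnn addr0.
- by rewrite scalekX perm1 kk_expn mulr1.
- rewrite -(permKV scalek z); move: (scalek^-1 z)%g => w.
  by rewrite permJ shift1X !permE /=; ring.
Qed.

Lemma affine_model_nonabelian : ~~ abelian (<[shift1]> <*> <[scalek]>)%g.
Proof.
apply/negP => /centsP cAA.
have shift1_in := subsetP (joing_subl _ _) _ (cycle_id shift1).
have scalek_in := subsetP (joing_subr _ _) _ (cycle_id scalek).
move/(congr1 (fun s : {perm F} => s 0)): (cAA _ (shift1_in <[scalek]>%g) _ (scalek_in <[shift1]>%g)).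
by rewrite !permM !permE /= add0r mul1r mul0r add0r; apply/eqP.
Qed.

End AffineModel.

Lemma Grp_generators (gT : finGroupType) p n k :
  ([set: gT] \homg Grp (a : b : (a ^+ p, b ^+ n, a ^ b = a ^+ k)))%g ->
  exists a b : gT, [/\ (<[a]> <*> <[b]> = [set: gT])%g,
                      (a ^+ p = 1)%g, (b ^+ n = 1)%g & (a ^ b = a ^+ k)%g].
Proof.
case/existsP=> -[a b] /=; rewrite !xpair_eqE /=.
by case/and4P=> /eqP ? /eqP ? /eqP ? /eqP ?; exists a, b.
Qed.

Lemma Grp_nonabelian (gT : finGroupType) p n k : prime p ->
  (k%:R : 'F_p) != 0 -> (k%:R : 'F_p) != 1 -> (k%:R : 'F_p) ^+ n = 1 ->
  ([set: gT] \isog Grp (a : b : (a ^+ p, b ^+ n, a ^ b = a ^+ k)))%g ->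
  ~~ abelian [set: gT].
Proof.
move=> p_prime kk_neq0 kk_neq1 kk_expn G_pres.
apply: contra (affine_model_nonabelian kk_neq0 kk_neq1) => abG.
have /homgP[f <-] : ((<[shift1 p]> <*> <[scalek kk_neq0]>)%G \homg [set: gT])%g.
  by rewrite G_pres (affine_model_hom p_prime kk_neq0 kk_expn).
exact: morphim_abelian.
Qed.

Section MetacyclicGroup.
Variables (p n k : nat) (gT : finGroupType) (a b : gT).
Hypotheses (p_prime : prime p) (n_gt0 : (0 < n)%N).
Hypotheses (a_p : (a ^+ p = 1)%g) (b_n : (b ^+ n = 1)%g) (a_b : (a ^ b = a ^+ k)%g).
Hypothesis gen_ab : (<[a]> <*> <[b]> = [set: gT])%g.
Local Notation F := 'F_p.
Local Notation kk := (k%:R : F).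
Local Notation K j := (kk ^+ j).

Definition apow (e : F) : gT := (a ^+ (e : nat))%g.

Lemma apow_nat m : apow m%:R = (a ^+ m)%g.
Proof. by rewrite /apow val_Fp_nat // expg_mod. Qed.

Lemma apowD u v : apow (u + v) = (apow u * apow v)%g.
Proof. by rewrite -(natr_Fp p_prime u) -(natr_Fp p_prime v) -natrD !apow_nat expgD. Qed.

Lemma apowM u v : apow (u * v) = (apow u ^+ v)%g.
Proof.
by rewrite -{1}(natr_Fp p_prime u) -{1}(natr_Fp p_prime v) -natrM apow_nat expgM.
Qed.

Lemma apow0 : apow 0 = 1%g.
Proof. by []. Qed.

Lemma apow1 : apow 1 = a.
Proof. by rewrite -[1]/(1%:R) apow_nat expg1. Qed.

Lemma apowJ u j : (apow u ^ (b ^+ j))%g = apow (u * K j).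
Proof.
elim: j u => [|j IH] u; first by rewrite expg0 conjg1 expr0 mulr1.
rewrite expgSr conjgM IH {1}/apow conjXg a_b -expgM -apow_nat.
by congr apow; rewrite natrM !natr_Fp // exprS; ring.
Qed.

Lemma apow_bXC u j : (apow u * b ^+ j = b ^+ j * apow (u * K j)%R)%g.
Proof. by rewrite conjgC apowJ. Qed.

Lemma mulg_apow_bX u m v l :
  (apow u * b ^+ m * (apow v * b ^+ l) = b ^+ (m + l) * apow ((u * K m + v) * K l)%R)%g.
Proof. by rewrite apow_bXC -!mulgA (mulgA (apow _)) -apowD apow_bXC mulgA -expgD. Qed.

Lemma commg_apow_bX u j v l :
  [~ apow u * b ^+ j, apow v * b ^+ l]%g =
  apow (u * K j * (K l - 1) + v * K l * (1 - K j)).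
Proof.
apply: (@mulgI _ (apow v * b ^+ l * (apow u * b ^+ j))%g); rewrite -commgC.
by rewrite !mulg_apow_bX -mulgA -apowD addnC; congr (_ * apow _)%g; ring.
Qed.

Lemma apow_bX_decomp g : exists u (j : 'I_n), g = (apow u * b ^+ j)%g.
Proof.
have nab : <[b]>%g \subset 'N(<[a]>)%g.
  rewrite cycle_subG; apply/normP/eqP.
  by rewrite -cycleJ eqEcard -!orderE orderJ leqnn andbT a_b cycle_subG mem_cycle.
have : g \in [set: gT] by rewrite inE.
rewrite -gen_ab norm_joinEr // => /mulsgP[_ _ /cycleP[m ->] /cycleP[l ->] ->].
by exists m%:R, (Ordinal (ltn_pmod l n_gt0)); rewrite apow_nat /= expg_mod.
Qed.

Hypothesis kk_neq1 : kk != 1.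

(* Written with commutators so that no normal form of [g] is needed; [affmapE]
   gives its value a^u b^j |-> a^(c u k^j + d (k^j - 1)). *)
Definition affmap (c d : F) : {ffun gT -> gT} :=
  [ffun g => ([~ g, b] ^+ (c / (kk - 1))%R * [~ g, a] ^+ (- d)%R)%g].

Definition affmaps (A : {set F}) : {set {ffun gT -> gT}} :=
  [set affmap c d | c in A, d in [set: F]].

Lemma mem_affmaps (A : {set F}) c d : c \in A -> affmap c d \in affmaps A.
Proof. by move=> cA; apply/imset2P; exists c d; rewrite ?inE. Qed.

Lemma affmapE c d u j :
  affmap c d (apow u * b ^+ j)%g = apow (c * u * K j + d * (K j - 1)).
Proof.
rewrite ffunE; have := commg_apow_bX u j 0 1; rewrite apow0 mul1g expg1 => ->.
have := commg_apow_bX u j 1 0; rewrite apow1 expg0 mulg1 => ->.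
have kk1_neq0 : kk - 1 != 0 by rewrite subr_eq0.
by rewrite -!apowM -apowD; congr apow; field.
Qed.

Lemma rcomp_affmap c d c' d' :
  rcomp (affmap c d) (affmap c' d') = affmap (c' * c) (c' * d).
Proof.
apply/ffunP => g; have [u [j ->]] := apow_bX_decomp g.
rewrite ffunE !affmapE -[apow (_ + _)]mulg1 -(expg0 b) affmapE.
by congr apow; rewrite expr0; ring.
Qed.

Lemma rho_affmap s t : rho (apow s * b ^+ t)%g = affmap (K t - 1) (- s * K t).
Proof.
apply/ffunP => g; have [u [j ->]] := apow_bX_decomp g.
by rewrite affmapE ffunE commg_apow_bX; congr apow; ring.
Qed.

Lemma lam_affmap s t : lam (apow s * b ^+ t)%g = affmap (1 - K t) (s * K t).
Proof.
apply/ffunP => g; have [u [j ->]] := apow_bX_decomp g.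
by rewrite affmapE ffunE commg_apow_bX; congr apow; ring.
Qed.

Lemma gen_sg_affmaps (Q : {set F}) :
  0 \in Q -> gen_sg (@rcomp gT) (affmaps Q) = affmaps (gen_sg *%R Q).
Proof.
move=> Q0; apply/setP => f; apply/idP/idP.
  move/gen_sgP; elim=> [_ /imset2P[c d cQ _ ->] |
                        _ _ _ /imset2P[c d cQ _ ->] _ /imset2P[c' d' c'Q _ ->]].
    by rewrite mem_affmaps ?mem_gen_sg.
  by rewrite rcomp_affmap mem_affmaps ?gen_sg_op.
case/imset2P=> c d /gen_sgP cQ _ ->; elim: cQ d => [c' c'Q | c1 c2 _ IH1 _ IH2] d.
  exact/mem_gen_sg/mem_affmaps.
have [-> | c1_neq0] := eqVneq c1 0.
  by rewrite /= mul0r; apply/mem_gen_sg/mem_affmaps.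
have -> : affmap (c1 * c2) d = rcomp (affmap c2 (d / c1)) (affmap c1 0).
  by rewrite rcomp_affmap [c1 * (d / c1)]mulrC divfK.
exact: gen_sg_op (IH2 _) (IH1 _).
Qed.

Hypothesis kk_neq0 : kk != 0.

Lemma rho_generators : [set rho g | g : gT] = affmaps [set K j - 1 | j : 'I_n].
Proof.
apply/setP => f; apply/imsetP/idP.
  case=> g _ ->; have [s [t ->]] := apow_bX_decomp g.
  by rewrite rho_affmap; apply/mem_affmaps/imsetP; exists t.
case/imset2P=> _ d /imsetP[t _ ->] _ ->; exists (apow (- d / K t)%R * b ^+ t)%g => //.
by rewrite rho_affmap mulNr divfK ?opprK ?expf_neq0.
Qed.

Lemma lam_generators : [set lam g | g : gT] = affmaps [set 1 - K j | j : 'I_n].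
Proof.
apply/setP => f; apply/imsetP/idP.
  case=> g _ ->; have [s [t ->]] := apow_bX_decomp g.
  by rewrite lam_affmap; apply/mem_affmaps/imsetP; exists t.
case/imset2P=> _ d /imsetP[t _ ->] _ ->; exists (apow (d / K t)%R * b ^+ t)%g => //.
by rewrite lam_affmap divfK ?expf_neq0.
Qed.

Lemma Rho_sgE : Rho_sg gT = affmaps (gen_sg *%R [set K j - 1 | j : 'I_n]).
Proof.
by rewrite /Rho_sg rho_generators gen_sg_affmaps // mem0_subrX1.
Qed.

Lemma Lam_sgE : Lam_sg gT = affmaps (gen_sg *%R [set 1 - K j | j : 'I_n]).
Proof.
by rewrite /Lam_sg lam_generators gen_sg_affmaps // mem0_subr1X.
Qed.

Hypothesis a_neq1 : a != 1%g.

Lemma order_a : #[a]%g = p.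
Proof. by apply/(prime_nt_dvdP p_prime); rewrite ?order_eq1 // order_dvdn a_p. Qed.

Lemma apow_inj : injective apow.
Proof.
move=> u v /eqP; rewrite /apow eq_expg_mod_order order_a.
have lt_p (e : F) : (e < p)%N by rewrite -[X in (_ < X)%N](Fp_cast p_prime) ltn_ord.
by rewrite !modn_small // => /eqP uv; apply: val_inj.
Qed.

Lemma affmap_inj c d c' d' : affmap c d = affmap c' d' -> c = c' /\ d = d'.
Proof.
(* [1%R]: in group scope [1] would be the unit of the additive group 'F_p. *)
move=> eq_cd; have := congr1 (fun f : {ffun gT -> gT} => f (apow 1%R * b ^+ 0)%g) eq_cd.
rewrite /= !affmapE expr0 subrr !mulr0 !addr0 !mulr1 => /apow_inj eq_c.
have := congr1 (fun f : {ffun gT -> gT} => f (apow 0 * b ^+ 1)%g) eq_cd.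
rewrite /= !affmapE eq_c !mulr0 !mul0r !add0r expr1 => /apow_inj eq_d.
have kk1_neq0 : kk - 1 != 0 by rewrite subr_eq0.
by split; last by apply: (mulIf kk1_neq0); exact: eq_d.
Qed.

Lemma card_affmaps (A : {set F}) : #|affmaps A| = (#|A| * p)%N.
Proof.
rewrite /affmaps curry_imset2X card_in_imset ?cardsX ?cardsT ?card_Fp //.
by move=> [c d] [c' d'] _ _ /affmap_inj [-> ->].
Qed.

End MetacyclicGroup.

Local Close Scope ring_scope.

Theorem theorem6p7 (p n k : nat) (gT : finGroupType)
  (p_prime : prime p) (n_gt0 : 0 < n) (k_gt0 : 0 < k)
  (cop : coprime p k.-1) (n_ind : is_ind p k n)
  (G_pres : ([set: gT] \isog Grp (a : b : (a ^+ p, b ^+ n, a ^ b = a ^+ k)))%g) :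
  let R : {set 'F_p} := [set ((k%:R : 'F_p) ^+ j - 1)%R | j : 'I_n] in
  let L : {set 'F_p} := [set (1 - (k%:R : 'F_p) ^+ j)%R | j : 'I_n] in
  [<-> Rho_sg gT = Lam_sg gT;
       sg_isomorphic (@rcomp gT) (Rho_sg gT) (Lam_sg gT);
       #|Rho_sg gT| = #|Lam_sg gT|;
       #|gen_sg (@GRing.mul 'F_p) R| = #|gen_sg (@GRing.mul 'F_p) L| ].
Proof.
move=> R L.
have kk_neq1 := Fp_nat_neq1 p_prime k_gt0 cop.
have kk_expn : (k%:R ^+ n = 1 :> 'F_p)%R.
  by case: n_ind => _ kn _; rewrite -natrX (Fp_nat_eq_mod p_prime kn).
have kk_neq0 : (k%:R != 0 :> 'F_p)%R.
  by apply: contra_eq_neq kk_expn => ->; rewrite expr0n eqn0Ngt n_gt0.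
have [a [b [gen_ab a_p b_n a_b]]] := Grp_generators (isoGrp_hom G_pres).
have a_neq1 : a != 1%g.
  apply: contraNneq (Grp_nonabelian p_prime kk_neq0 kk_neq1 kk_expn G_pres) => a1.
  by rewrite -gen_ab a1 cycle1 joing1G cycle_abelian.
have RhoE := Rho_sgE p_prime n_gt0 a_p b_n a_b gen_ab kk_neq1 kk_neq0.
have LamE := Lam_sgE p_prime n_gt0 a_p b_n a_b gen_ab kk_neq1 kk_neq0.
have card_affmaps := card_affmaps p_prime a_p a_b kk_neq1 a_neq1.
tfae=> [-> | /sg_isomorphic_card // | | cardRL].
- exact: sg_isomorphic_refl.
- by rewrite RhoE LamE !card_affmaps => /eqP; rewrite eqn_pmul2r ?prime_gt0 // => /eqP.
- rewrite RhoE LamE (mulr_closed0_card_inj _ _ _ _ cardRL) //;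
    by rewrite ?mem_gen_sg ?mem0_subrX1 ?mem0_subr1X //; apply: gen_sg_op.
Qed.
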